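(* Let $X,Y$ be Banach spaces and let $Z$ be a $1$-complemented subspace of $Y$. If $\mathrm{INA}_\pi(X\widehat{\otimes}_\pi Y)=X\widehat{\otimes}_\pi Y$, then $\mathrm{INA}_\pi(X\widehat{\otimes}_\pi Z)=X\widehat{\otimes}_\pi Z$.
   Context: A subspace $Z\subseteq Y$ is $1$-complemented if there is a bounded linear projection $P:Y\to Z$ with $\|P\|=1$. Definition: $u\in X\widehat{\otimes}_\pi Y$ is an integral projective norm-attaining tensor, written $u\in\mathrm{INA}_\pi(X\widehat{\otimes}_\pi Y)$, if there is a finite positive Borel measure $\mu$ on $B_X\times B_Y$ (norm topology) such that $\varphi:B_X\times B_Y\to X\widehat{\otimes}_\pi Y$, $\varphi(x,y)=x\otimes y$, is $\mu$-Bochner integrable, $u=\int_{B_X\times B_Y}x\otimes y\,d\mu(x,y)$ (Bochner integral) and $\|\mu\|=\|u\|_\pi$; then $u$ is said to be witnessed by $\mu$. *)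

From HB Require Import structures.
From mathcomp Require Import all_boot all_order all_algebra.
From mathcomp Require Import all_classical all_reals all_analysis.
Set Implicit Arguments. Unset Strict Implicit. Unset Printing Implicit Defensive.
Import Order.TTheory GRing.Theory Num.Theory.
Import numFieldNormedType.Exports.
Local Open Scope classical_set_scope.
Local Open Scope ring_scope.

Section ProjTensor.
Variables (R : realType) (X Y : normedModType R).

(** Bounded bilinear forms on X x Y (= the dual of X ⊗^_π Y). *)
Definition bbilinear (B : X -> Y -> R) : Prop :=
  [/\ (forall (a : R) x1 x2 y, B (a *: x1 + x2) y = a * B x1 y + B x2 y),
      (forall (a : R) x y1 y2, B x (a *: y1 + y2) = a * B x y1 + B x y2) &
      exists C : R, forall x y, `|B x y| <= C * `|x| * `|y| ].

(** Concrete model of X ⊗^_π Y: a tensor is represented by the functional it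
    induces on bounded bilinear forms; two functionals denote the same tensor
    iff they agree on all bounded bilinear forms. *)
Definition tens := (X -> Y -> R) -> R.

Definition tmul (x : X) (y : Y) : tens := fun B => B x y.

Definition teq (u v : tens) : Prop := forall B, bbilinear B -> u B = v B.

Definition trepr (xs : nat -> X) (ys : nat -> Y) (u : tens) : Prop :=
  cvg (series (fun n => `|xs n| * `|ys n|) @ \oo) /\
  forall B, bbilinear B ->
    series (fun n => B (xs n) (ys n)) @ \oo --> u B.

Definition in_ptensor (u : tens) : Prop := exists xs ys, trepr xs ys u.

Definition pnorm (u : tens) : R :=
  inf [set s : R | exists xs ys, trepr xs ys u /\
        series (fun n => `|xs n| * `|ys n|) @ \oo --> s].

Definition pointT := g_sigma_algebraType (@open (X * Y)%type).
Definition BXY : set pointT := [set p | `|p.1| <= 1 /\ `|p.2| <= 1].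

Definition simple_tens (m : nat) (A : nat -> set pointT) (U : nat -> tens)
  (p : pointT) : tens :=
  fun B => \sum_(k < m) (if `[< A k p >] then U k B else 0).

Definition tdiff (u v : tens) : tens := fun B => u B - v B.

(** Bochner integrability of phi(x,y) = x ⊗ y on B_X x B_Y w.r.t. mu:
    phi is strongly mu-measurable (mu-a.e. limit in the pi-norm of simple
    functions) and int ||phi|| dmu < oo. *)
Definition bochner_integrable_phi
  (mu : {finite_measure set pointT -> \bar R}) : Prop :=
  (exists (m : nat -> nat) (A : nat -> nat -> set pointT)
          (U : nat -> nat -> tens),
     (forall n k, measurable (A n k)) /\ (forall n k, in_ptensor (U n k)) /\
     {ae mu, forall p : pointT, BXY p ->
        (fun n => pnorm (tdiff (tmul p.1 p.2) (simple_tens (m n) (A n) (U n) p)))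
          @ \oo --> 0}) /\
  (\int[mu]_(p in BXY) (pnorm (tmul p.1 p.2))%:E < +oo)%E.

Definition witnessed (u : tens) (mu : {finite_measure set pointT -> \bar R}) :
  Prop :=
  mu (~` BXY) = 0%E /\
  bochner_integrable_phi mu /\
  (forall B, bbilinear B ->
     ((u B)%:E = \int[mu]_(p in BXY) (B p.1 p.2)%:E)%E) /\
  mu BXY = (pnorm u)%:E.

Definition INA_pi (u : tens) : Prop :=
  exists mu : {finite_measure set pointT -> \bar R}, witnessed u mu.

Definition all_INA : Prop := forall u, in_ptensor u -> INA_pi u.

End ProjTensor.

(** Z (a Banach space) is a 1-complemented subspace of Y, identified with its
    image under the linear isometric embedding J : Z -> Y; P : Y -> Z is a
    bounded linear projection onto Z (P (J z) = z) with ||P|| = 1. *)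
Definition one_complemented (R : realType) (Z Y : normedModType R)
  (J : Z -> Y) : Prop :=
  [/\ (forall (a : R) z1 z2, J (a *: z1 + z2) = a *: J z1 + J z2),
      (forall z, `|J z| = `|z|) &
      exists P : Y -> Z,
        [/\ (forall (a : R) y1 y2, P (a *: y1 + y2) = a *: P y1 + P y2),
            (forall z, P (J z) = z),
            (forall y, `|P y| <= `|y|) &
            (forall e : R, 0 < e -> exists y, `|y| <= 1 /\ 1 - e < `|P y|)]].

(* Let v = (id ⊗ J) u. As J is an isometry and P ∘ J = id with ‖P‖ ≤ 1, the maps
   id ⊗ J and id ⊗ P are contractions, hence ‖v‖π = ‖u‖π and u = (id ⊗ P) v.
   If μ witnesses v, its image ν under (x, y) ↦ (x, P y) witnesses u: ν is carried
   by B_X × B_Z, has mass ‖v‖π = ‖u‖π, and integrates a bounded bilinear form B to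
   v (B ∘ (id × P)) = u (B).
   The delicate point is the Bochner integrability of x ⊗ z for ν. The simple
   approximations of x ⊗ y for μ do not descend to ν, but their values form a
   countable family whose images under id ⊗ P approximate x ⊗ P y wherever the
   approximation converges for μ; and a map approximated almost everywhere by a
   fixed sequence is an a.e. limit of simple functions (at stage n, pick the first
   nearest of the first n terms). *)

From HB Require Import structures.
From mathcomp Require Import all_boot all_order all_algebra.
From mathcomp Require Import all_classical all_reals all_analysis.
From mathcomp Require Import lra measurable_realfun.
Set Implicit Arguments. Unset Strict Implicit. Unset Printing Implicit Defensive.
Import Order.TTheory GRing.Theory Num.Theory.
Import numFieldNormedType.Exports.
Local Open Scope classical_set_scope.
Local Open Scope ring_scope.

Section series_lemmas.
Variable R : realType.
Implicit Types (a b : R ^nat) (t A : R).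

Lemma eq_cvg_series a b (l : R) :
  a =1 b -> series b @ \oo --> l -> series a @ \oo --> l.
Proof.
by move=> ab; rewrite (_ : series a = series b)// funeqE => n; exact: eq_bigr.
Qed.

Lemma series_delta0 t : series (fun n => if n == 0%N then t else 0) @ \oo --> t.
Proof.
apply: cvg_near_cst; exists 1%N => // -[|N] //= _.
by rewrite /series /= big_nat_recl //= big1 ?addr0.
Qed.

Lemma series_interleave a b (A B : R) :
  series a @ \oo --> A -> series b @ \oo --> B ->
  series (fun n => if odd n then b n./2 else a n./2) @ \oo --> A + B.
Proof.
move=> ha hb; set c := (fun n => if odd n then b n./2 else a n./2).
have c_double k : series c k.*2 = series a k + series b k /\
                  series c k.*2.+1 = series a k.+1 + series b k.
  elim: k => [|k [IH1 IH2]].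
    by rewrite !seriesSr /series /= !big_geq // /c /= !add0r addr0.
  have e1 : series c k.+1.*2 = series a k.+1 + series b k.+1.
    rewrite doubleS seriesSr IH2 /c /= odd_double uphalf_double.
    by rewrite [series b k.+1]seriesSr addrA.
  split => //.
  by rewrite seriesSr e1 /c /= odd_double /= doubleK [series a k.+2]seriesSr addrAC.
have -> : series c = (fun N => series a (uphalf N) + series b N./2).
  apply/funext => N; rewrite -[in LHS](odd_double_half N) uphalf_half.
  by case: (odd N); [rewrite add1n (c_double _).2|rewrite add0n (c_double _).1].
have half_oo : (fun N => N./2) @ \oo --> \oo.
  rewrite (_ : (fun N => N./2) = divn^~ 2)%N; first exact: cvg_divnr.
  by apply/funext => N; rewrite divn2.
apply: cvgD; last exact: cvg_comp half_oo hb.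
apply: (cvg_comp _ _ _ ha); rewrite (_ : uphalf = (fun N => N./2) \o addn^~ 1%N).
  exact: cvg_comp (cvg_addnr 1) half_oo.
by apply/funext => N /=; rewrite addn1.
Qed.

Lemma series_lim_ge0 a A : (forall n, 0 <= a n) -> series a @ \oo --> A -> 0 <= A.
Proof.
move=> a0 hA; rewrite -(cvg_lim _ hA) //; apply: limr_ge; first exact: cvgP hA.
by apply: nearW => n; rewrite /series /= sumr_ge0.
Qed.

Lemma series_le_lim a b A : (forall n, 0 <= b n <= a n) ->
  series a @ \oo --> A -> exists2 B, series b @ \oo --> B & B <= A.
Proof.
move=> ba hA; have b0 n : 0 <= b n by case/andP: (ba n).
have bla n : b n <= a n by case/andP: (ba n).
have cb : cvgn (series b).
  by apply: (series_le_cvg b0 _ bla (cvgP _ hA)) => n; exact: le_trans (bla n).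
exists (limn (series b)) => //.
by rewrite -(cvg_lim _ hA) //; exact: lim_series_le cb (cvgP _ hA) bla.
Qed.

End series_lemmas.
Arguments series_delta0 {R} t.

Section bilinear_forms.
Variables (R : realType) (X Y : normedModType R) (B : X -> Y -> R).
Hypothesis hB : bbilinear B.

Lemma bbilin0l y : B 0 y = 0.
Proof.
case: hB => linl _ _; have := linl 1 0 0 y; rewrite scaler0 addr0 mul1r.
by rewrite -{1}[B 0 y]addr0 => /addrI <-.
Qed.

Lemma bbilin0r x : B x 0 = 0.
Proof.
case: hB => _ linr _; have := linr 1 x 0 0; rewrite scaler0 addr0 mul1r.
by rewrite -{1}[B x 0]addr0 => /addrI <-.
Qed.

Lemma bbilinNl x y : B (- x) y = - B x y.
Proof.
case: hB => linl _ _.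
by rewrite -scaleN1r -[_ *: x]addr0 linl bbilin0l addr0 mulN1r.
Qed.

Lemma bbilinNr x y : B x (- y) = - B x y.
Proof.
case: hB => _ linr _.
by rewrite -scaleN1r -[_ *: y]addr0 linr bbilin0r addr0 mulN1r.
Qed.

Lemma bbilinBl x1 x2 y : B (x1 - x2) y = B x1 y - B x2 y.
Proof. by case: hB => linl _ _; rewrite -[x1]scale1r linl mul1r scale1r bbilinNl. Qed.

Lemma bbilinBr x y1 y2 : B x (y1 - y2) = B x y1 - B x y2.
Proof. by case: hB => _ linr _; rewrite -[y1]scale1r linr mul1r scale1r bbilinNr. Qed.

End bilinear_forms.

Section projective_norm.
Variables (R : realType) (X Y : normedModType R).
Implicit Types (u v w : tens X Y) (x : X) (y : Y).

Definition tzero : tens X Y := fun _ => 0.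
Definition tadd u v : tens X Y := fun B => u B + v B.
Definition topp u : tens X Y := fun B => - u B.

Definition pnorm_set u := [set s : R | exists xs ys, trepr xs ys u /\
  series (fun n => `|xs n| * `|ys n|) @ \oo --> s].

Lemma pnormE u : pnorm u = inf (pnorm_set u).
Proof. by []. Qed.

Lemma pnorm_set_ge0 u s : pnorm_set u s -> 0 <= s.
Proof. by move=> [xs [ys [_ h]]]; apply: series_lim_ge0 h => n; rewrite mulr_ge0. Qed.

Lemma pnorm_ge0 u : 0 <= pnorm u.
Proof.
rewrite pnormE; have [->|/set0P ne] := eqVneq (pnorm_set u) set0; first by rewrite inf0.
exact: lb_le_inf ne (@pnorm_set_ge0 u).
Qed.

Lemma pnorm_le u s : pnorm_set u s -> pnorm u <= s.
Proof. by move=> us; apply: ge_inf us; exists 0 => t; exact: pnorm_set_ge0. Qed.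

Lemma pnorm_set_in_ptensor u s : pnorm_set u s -> in_ptensor u.
Proof. by move=> [xs [ys [h _]]]; exists xs, ys. Qed.

Lemma pnorm_approx u e : in_ptensor u -> 0 < e ->
  exists2 s, pnorm_set u s & s < pnorm u + e.
Proof.
move=> [xs [ys [hc hB]]] e0; apply: inf_adherent => //; split.
  by exists (lim (series (fun n => `|xs n| * `|ys n|) @ \oo)), xs, ys.
by exists 0 => t; exact: pnorm_set_ge0.
Qed.

Lemma trepr_teq xs ys u v : teq u v -> trepr xs ys u -> trepr xs ys v.
Proof. by move=> uv [h1 h2]; split => // B hB; rewrite -uv //; exact: h2. Qed.

Lemma pnorm_teq u v : teq u v -> pnorm u = pnorm v.
Proof.
move=> uv; rewrite !pnormE; congr inf; apply/seteqP.
split => s [xs [ys [h1 h2]]]; exists xs, ys; split => //; apply: trepr_teq h1 => //.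
by move=> B hB; rewrite uv.
Qed.

Lemma pnorm_set_tmul x y : pnorm_set (tmul x y) (`|x| * `|y|).
Proof.
exists (fun n => if n == 0%N then x else 0), (fun n => if n == 0%N then y else 0).
have sum_norm : series (fun n => `|(if n == 0%N then x else 0)| *
    `|(if n == 0%N then y else 0)|) @ \oo --> `|x| * `|y|.
  by apply: (eq_cvg_series _ (series_delta0 _)) => -[|n] //=; rewrite normr0 mul0r.
split => //; split; first exact: cvgP sum_norm.
move=> B hB; apply: (eq_cvg_series _ (series_delta0 _)).
by case=> [|n] //=; rewrite bbilin0l.
Qed.

Lemma in_ptensor_tmul x y : in_ptensor (tmul x y).
Proof. exact: pnorm_set_in_ptensor (pnorm_set_tmul x y). Qed.

Lemma pnorm_tmul_le x y : pnorm (tmul x y) <= `|x| * `|y|.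
Proof. exact: pnorm_le (pnorm_set_tmul x y). Qed.

Lemma in_ptensor_teq u v : in_ptensor u -> teq u v -> in_ptensor v.
Proof. by move=> [xs [ys h]] uv; exists xs, ys; exact: trepr_teq h. Qed.

Lemma in_ptensor_zero : in_ptensor tzero.
Proof.
by apply: (in_ptensor_teq (in_ptensor_tmul 0 0)) => B hB; rewrite /tmul bbilin0l.
Qed.

Lemma pnorm_set_add u v s1 s2 :
  pnorm_set u s1 -> pnorm_set v s2 -> pnorm_set (tadd u v) (s1 + s2).
Proof.
move=> [xs [ys [[_ hu] h1]]] [xs' [ys' [[_ hv] h2]]].
exists (fun n => if odd n then xs' n./2 else xs n./2).
exists (fun n => if odd n then ys' n./2 else ys n./2).
have sum_norm : series (fun n => `|(if odd n then xs' n./2 else xs n./2)| *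
    `|(if odd n then ys' n./2 else ys n./2)|) @ \oo --> s1 + s2.
  by apply: (eq_cvg_series _ (series_interleave h1 h2)) => n; case: (odd n).
split => //; split; first exact: cvgP sum_norm.
move=> B hB.
apply: (eq_cvg_series _ (series_interleave (hu B hB) (hv B hB))).
by move=> n; case: (odd n).
Qed.

Lemma in_ptensor_add u v : in_ptensor u -> in_ptensor v -> in_ptensor (tadd u v).
Proof.
move=> iu iv; have [s1 us1 _] := pnorm_approx iu ltr01.
have [s2 vs2 _] := pnorm_approx iv ltr01.
exact: pnorm_set_in_ptensor (pnorm_set_add us1 vs2).
Qed.

Lemma pnorm_add_le u v : in_ptensor u -> in_ptensor v ->
  pnorm (tadd u v) <= pnorm u + pnorm v.
Proof.
move=> iu iv; apply/ler_addgt0Pr => e e0; have e2 : 0 < e / 2 by rewrite divr_gt0.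
have [s1 us1 s1_lt] := pnorm_approx iu e2.
have [s2 vs2 s2_lt] := pnorm_approx iv e2.
apply: le_trans (pnorm_le (pnorm_set_add us1 vs2)) _.
by apply: ltW; rewrite [e]splitr addrACA; exact: ltrD.
Qed.

Lemma pnorm_set_opp u s : pnorm_set u s -> pnorm_set (topp u) s.
Proof.
move=> [xs [ys [[_ hu] h]]]; exists (fun n => - xs n), ys.
have sum_norm : series (fun n => `|- xs n| * `|ys n|) @ \oo --> s.
  by apply: (eq_cvg_series _ h) => n; rewrite normrN.
split => //; split=> [|B hB]; first exact: cvgP sum_norm.
rewrite (_ : series _ = fun N => - series (fun n => B (xs n) (ys n)) N).
  exact: cvgN (hu B hB).
apply/funext => n; rewrite /series /= -sumrN.
by apply: eq_bigr => i _; rewrite bbilinNl.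
Qed.

Lemma in_ptensor_opp u : in_ptensor u -> in_ptensor (topp u).
Proof.
move=> iu; have [s us _] := pnorm_approx iu ltr01.
exact: pnorm_set_in_ptensor (pnorm_set_opp us).
Qed.

Lemma in_ptensor_diff u v : in_ptensor u -> in_ptensor v -> in_ptensor (tdiff u v).
Proof. by move=> iu iv; apply: in_ptensor_add iu (in_ptensor_opp iv). Qed.

Lemma pnorm_opp u : pnorm (topp u) = pnorm u.
Proof.
rewrite !pnormE; congr inf; apply/seteqP; split => s; last exact: pnorm_set_opp.
move/pnorm_set_opp; rewrite /topp (_ : (fun B => - - u B) = u) //.
by apply/funext => B; rewrite opprK.
Qed.

Lemma pnorm_diffC u v : pnorm (tdiff u v) = pnorm (tdiff v u).
Proof.
by rewrite -pnorm_opp; congr pnorm; apply/funext => B; rewrite /topp /tdiff opprB.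
Qed.

Lemma pnorm_diff_triangle u v w : in_ptensor u -> in_ptensor v -> in_ptensor w ->
  pnorm (tdiff u w) <= pnorm (tdiff u v) + pnorm (tdiff v w).
Proof.
move=> iu iv iw; rewrite (_ : tdiff u w = tadd (tdiff u v) (tdiff v w)).
  by apply: pnorm_add_le; exact: in_ptensor_diff.
by apply/funext => B; rewrite /tadd /tdiff addrA subrK.
Qed.

Lemma pnorm_tmul_diff_le x y x' y' :
  pnorm (tdiff (tmul x y) (tmul x' y')) <= `|x - x'| * `|y| + `|x'| * `|y - y'|.
Proof.
have split_diff : teq (tdiff (tmul x y) (tmul x' y'))
                      (tadd (tmul (x - x') y) (tmul x' (y - y'))).
  by move=> B hB; rewrite /tdiff /tadd /tmul bbilinBl // bbilinBr // addrA subrK.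
rewrite (pnorm_teq split_diff).
apply: le_trans (pnorm_add_le (in_ptensor_tmul _ _) (in_ptensor_tmul _ _)) _.
by apply: lerD; exact: pnorm_tmul_le.
Qed.

Lemma in_ptensor_masked_sum (M : nat) (s : seq bool)
    (U : nat -> tens X Y) : (forall k, in_ptensor (U k)) ->
  in_ptensor (fun B => \sum_(k < M) (if nth false s k then U k B else 0)).
Proof.
move=> iU; elim: M => [|M IH].
  by apply: (in_ptensor_teq in_ptensor_zero) => B _; rewrite big_ord0.
have iUM : in_ptensor (if nth false s M then U M else tzero).
  by case: ifP => _; [exact: iU|exact: in_ptensor_zero].
apply: (in_ptensor_teq (in_ptensor_add IH iUM)) => B _.
by rewrite big_ord_recr /tadd /=; case: ifP.
Qed.

End projective_norm.
Arguments tzero {R X Y}.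
Arguments in_ptensor_zero {R X Y}.

Section contraction_map.
Variables (R : realType) (X Y1 Y2 : normedModType R) (L : Y1 -> Y2).
Hypothesis linL : forall (a : R) y1 y2, L (a *: y1 + y2) = a *: L y1 + L y2.
Hypothesis contrL : forall y, `|L y| <= `|y|.

Definition tmap (u : tens X Y1) : tens X Y2 := fun B => u (fun x y => B x (L y)).

Lemma bbilinear_comp (B : X -> Y2 -> R) :
  bbilinear B -> bbilinear (fun x y => B x (L y)).
Proof.
case=> linl linr [C hC]; split => [a x1 x2 y|a x y1 y2|]; first exact: linl.
  by rewrite linL linr.
exists `|C| => x y; apply: le_trans (hC x (L y)) _; rewrite -!mulrA.
apply: le_trans (ler_norm _) _; rewrite !normrM !normr_id.
by apply: ler_wpM2l => //; exact: ler_wpM2l.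
Qed.

Lemma pnorm_set_map u s : pnorm_set u s -> exists2 s', pnorm_set (tmap u) s' & s' <= s.
Proof.
move=> [xs [ys [[_ hu] h]]].
have le_norm n : 0 <= `|xs n| * `|L (ys n)| <= `|xs n| * `|ys n|.
  by rewrite mulr_ge0 //= ler_wpM2l.
have [s' hs' le] := series_le_lim le_norm h.
exists s' => //; exists xs, (fun n => L (ys n)); split => //.
split; first exact: cvgP hs'.
by move=> B hB; apply: hu; exact: bbilinear_comp.
Qed.

Lemma in_ptensor_map u : in_ptensor u -> in_ptensor (tmap u).
Proof.
move=> iu; have [s us _] := pnorm_approx iu ltr01.
by have [s' us' _] := pnorm_set_map us; exact: pnorm_set_in_ptensor us'.
Qed.

Lemma pnorm_map_le u : in_ptensor u -> pnorm (tmap u) <= pnorm u.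
Proof.
move=> iu; apply/ler_addgt0Pr => e e0; have [s us s_lt] := pnorm_approx iu e0.
have [s' us' s'_le] := pnorm_set_map us.
by apply: le_trans (pnorm_le us') _; apply: le_trans s'_le _; exact: ltW.
Qed.

Lemma contraction_continuous : continuous L.
Proof.
have L0 : L 0 = 0.
  by have := linL 1 0 0; rewrite scaler0 addr0 scale1r -{1}[L 0]addr0 => /addrI <-.
have LN y : L (- y) = - L y.
  by have := linL (-1) y 0; rewrite !addr0 L0 addr0 !scaleN1r.
have LB y1 y2 : L y1 - L y2 = L (y1 - y2).
  by have := linL 1 y1 (- y2); rewrite !scale1r LN => ->.
move=> y; apply/cvgrPdist_lt => e e0.
have /cvgrPdist_lt/(_ e e0) : (fun t : Y1 => t) @ y --> y by exact: cvg_id.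
by apply: filterS => t; rewrite LB; exact: le_lt_trans (contrL _).
Qed.

End contraction_map.

Section product_continuity.
Variables (R : realType) (X Y : normedModType R).

Lemma continuous_of_bilinear_bound (g : X * Y -> R) (K : R) : 0 <= K ->
  (forall x y x' y',
     `|g (x, y) - g (x', y')| <= K * (`|x - x'| * `|y| + `|x'| * `|y - y'|)) ->
  continuous g.
Proof.
move=> K0 hg [x y]; apply/cvgrPdist_lt => e e0.
set M := K * (`|y| + `|x| + 1).
have M0 : 0 <= M by rewrite mulr_ge0 // !addr_ge0.
have M1 : 0 < M + 1 by rewrite ltr_wpDl.
set d := Num.min 1 (e / (M + 1)).
have d0 : 0 < d by rewrite lt_min ltr01 divr_gt0.
have d1 : d <= 1 by rewrite ge_min lexx.
have de : d <= e / (M + 1) by rewrite ge_min lexx orbT.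
have near_xy : \forall t \near (x, y), `|x - t.1| < d /\ `|y - t.2| < d.
  have /cvgrPdist_lt/(_ d d0) h1 : fst @ (x, y) --> x by exact: cvg_fst.
  have /cvgrPdist_lt/(_ d d0) h2 : snd @ (x, y) --> y by exact: cvg_snd.
  by near=> t; split; [near: t; exact: h1|near: t; exact: h2].
apply: filterS near_xy => -[x' y'] /= [dx dy]; apply: le_lt_trans (hg x y x' y') _.
have x'_le : `|x'| <= `|x| + d.
  by rewrite -[x'](subKr x) (le_trans (ler_normB _ _)) // lerD2l ltW.
have : K * (`|x - x'| * `|y| + `|x'| * `|y - y'|) <= M * d.
  rewrite /M -mulrA ler_wpM2l // !mulrDl mul1r -addrA; apply: lerD.
    by rewrite mulrC ler_wpM2l // ltW.
  apply: le_trans (_ : (`|x| + d) * d <= _).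
    by apply: ler_pM => //; exact: ltW.
  by rewrite mulrDl lerD2l -[X in _ <= X]mul1r ler_wpM2r // ltW.
move/le_lt_trans; apply; apply: le_lt_trans (_ : M * (e / (M + 1)) < e).
  by rewrite ler_wpM2l.
by rewrite mulrA ltr_pdivrMr // mulrC ltr_pM2l // ltrDl.
Unshelve. all: by end_near.
Qed.

Lemma bbilinear_continuous (B : X -> Y -> R) : bbilinear B ->
  continuous (fun q : X * Y => B q.1 q.2).
Proof.
move=> hB; case: (hB) => _ _ [C hC].
apply: (@continuous_of_bilinear_bound _ `|C|) => // x y x' y' /=.
have -> : B x y - B x' y' = B (x - x') y + B x' (y - y').
  by rewrite (bbilinBl hB) (bbilinBr hB) addrA subrK.
apply: le_trans (ler_normD _ _) _; rewrite mulrDr.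
apply: lerD; apply: le_trans (hC _ _) _.
  by rewrite -mulrA ler_wpM2r ?mulr_ge0 // ler_norm.
by rewrite -mulrA ler_wpM2r ?mulr_ge0 // ler_norm.
Qed.

Definition pdist (F : tens X Y) (q : X * Y) : R := pnorm (tdiff (tmul q.1 q.2) F).

Lemma pdist_continuous F : in_ptensor F -> continuous (pdist F).
Proof.
move=> iF; apply: (@continuous_of_bilinear_bound _ 1) => // x y x' y'.
rewrite mul1r /pdist /=; apply: le_trans (pnorm_tmul_diff_le x y x' y').
have i1 := in_ptensor_tmul x y; have i2 := in_ptensor_tmul x' y'.
have := pnorm_diff_triangle i1 i2 iF; have := pnorm_diff_triangle i2 i1 iF.
rewrite (pnorm_diffC (tmul x' y') (tmul x y)) ler_norml; lra.
Qed.

End product_continuity.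

Section borel_measurability.
Variables (R : realType) (X Y : normedModType R).

Lemma open_measurable_pointT (A : set (X * Y)) :
  open A -> measurable (A : set (pointT X Y)).
Proof. exact: sub_sigma_algebra. Qed.

Lemma continuous_measurable_pointT (g : X * Y -> R) :
  continuous g -> measurable_fun setT (g : pointT X Y -> R).
Proof.
move=> /continuousP cg; apply: (measurability _ (RGenOpens.measurableE R)).
move=> _ [_ [a [b ->]] <-]; apply: measurableI => //.
by apply: open_measurable_pointT; apply: cg; exact: interval_open.
Qed.

Lemma measurable_pointT_lt (f g : X * Y -> R) : continuous f -> continuous g ->
  measurable ([set q | f q < g q] : set (pointT X Y)).
Proof.
move=> cf cg; apply: open_measurable_pointT.
rewrite (_ : [set q | f q < g q] = (fun q => g q - f q) @^-1` `]0, +oo[).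
  have cgf : continuous (fun q => g q - f q).
    by move=> q; apply: cvgB; [exact: cg|exact: cf].
  exact: (continuousP _).1 cgf _ (interval_open _ _).
by apply/seteqP; split => q /=; rewrite in_itv /= andbT subr_gt0.
Qed.

Lemma measurable_pointT_le (f g : X * Y -> R) : continuous f -> continuous g ->
  measurable ([set q | f q <= g q] : set (pointT X Y)).
Proof.
move=> cf cg; rewrite (_ : [set q | f q <= g q] = ~` [set q | g q < f q]).
  by apply: measurableC; exact: measurable_pointT_lt.
by apply/seteqP; split => q /=; rewrite leNgt => /negP.
Qed.

Lemma measurable_BXY : measurable (@BXY R X Y).
Proof.
have norm_cont (V : normedModType R) (pr : X * Y -> V) : continuous pr ->
    continuous (fun q => `|pr q|).
  by move=> cpr q; exact: (continuous_comp (cpr q) (@norm_continuous _ _ _)).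
apply: measurableI; (apply: measurable_pointT_le; last by move=> q; exact: cvg_cst).
- by apply: norm_cont => q; exact: cvg_fst.
- by apply: norm_cont => q; exact: cvg_snd.
Qed.

End borel_measurability.

Lemma continuous_measurable_pointT_map (R : realType) (X1 Y1 X2 Y2 : normedModType R)
    (T : X1 * Y1 -> X2 * Y2) :
  continuous T -> measurable_fun setT (T : pointT X1 Y1 -> pointT X2 Y2).
Proof.
move=> /continuousP cT.
apply: (@measurability _ _ (pointT X1 Y1) (pointT X2 Y2) setT T open) => // _ [A oA <-].
by apply: measurableI => //; apply: open_measurable_pointT; exact: cT.
Qed.

Section finite_pushforward.
Context d1 d2 (T1 : measurableType d1) (T2 : measurableType d2) (R : realType).
Variables (mu : {finite_measure set T1 -> \bar R}) (f : {mfun T1 >-> T2}).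

Definition fin_pushforward := pushforward mu f.

Let mpreimage A : measurable A -> measurable (f @^-1` A).
Proof. by move=> mA; rewrite -[X in measurable X]setTI; exact: measurable_funP. Qed.

Let fin_pushforward0 : fin_pushforward set0 = 0%E.
Proof. by rewrite /fin_pushforward /pushforward preimage_set0 measure0. Qed.

Let fin_pushforward_ge0 A : (0 <= fin_pushforward A)%E.
Proof. exact: measure_ge0. Qed.

Let fin_pushforward_sigma_additive : semi_sigma_additive fin_pushforward.
Proof.
move=> F mF tF mUF; rewrite /fin_pushforward /pushforward preimage_bigcup.
apply: measure_semi_sigma_additive => [n||]; first exact: mpreimage.
  apply/trivIsetP => /= i j _ _ ij; rewrite -preimage_setI.
  by move/trivIsetP : tF => /(_ _ _ _ _ ij) ->//; rewrite preimage_set0.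
by rewrite -preimage_bigcup; exact: mpreimage.
Qed.

HB.instance Definition _ := isMeasure.Build _ _ _ fin_pushforward
  fin_pushforward0 fin_pushforward_ge0 fin_pushforward_sigma_additive.

Let fin_pushforward_fin : fin_num_fun fin_pushforward.
Proof. by move=> A mA; apply: fin_num_measure; exact: mpreimage. Qed.

HB.instance Definition _ := Measure_isFinite.Build _ _ _ fin_pushforward
  fin_pushforward_fin.

End finite_pushforward.

Section pushforward_onto.
Local Open Scope ereal_scope.
Context d1 d2 (T1 : measurableType d1) (T2 : measurableType d2) (R : realType).
Variables (mu : {measure set T1 -> \bar R}) (f : T1 -> T2).
Variables (D1 : set T1) (D2 : set T2).
Hypotheses (mf : measurable_fun setT f) (mD1 : measurable D1) (mD2 : measurable D2).
Hypotheses (D1_full : mu (~` D1) = 0) (fD1 : D1 `<=` f @^-1` D2).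

Let mpreimage A : measurable A -> measurable (f @^-1` A).
Proof. by move=> mA; rewrite -[X in measurable X]setTI; exact: mf. Qed.

Lemma pushforward_compl0 : pushforward mu f (~` D2) = 0.
Proof.
apply: (subset_measure0 _ _ _ D1_full); first exact/mpreimage/measurableC.
  exact: measurableC.
by move=> x /= nD2x D1x; exact/nD2x/fD1.
Qed.

Lemma pushforward_onto : pushforward mu f D2 = mu D1.
Proof.
have mfD2 := mpreimage mD2.
rewrite /pushforward (_ : f @^-1` D2 = D1 `|` (f @^-1` D2 `&` ~` D1)).
  apply: measureU0 => //; first exact/measurableI/measurableC.
  apply: subset_measure0 D1_full; last exact: subIsetr.
  - exact/measurableI/measurableC.
  - exact: measurableC.
apply/seteqP; split => [x fx|x [/fD1 //|[] //]].
by have [D1x|nD1x] := pselect (D1 x); [left|right].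
Qed.

Lemma ge0_integral_pushforward_onto (g : T2 -> \bar R) :
  measurable_fun setT g -> (forall y, 0 <= g y) ->
  \int[pushforward mu f]_(y in D2) g y = \int[mu]_(x in D1) g (f x).
Proof.
move=> mg g0; rewrite ge0_integral_pushforward //; last exact: measurable_funTS.
rewrite (@ge0_negligible_integral _ _ _ mu _ (~` D1)) //.
- congr integral; apply/seteqP; split => [x [_ /contrapT //]|x D1x].
  by split; [exact: fD1|exact].
- exact: measurableC.
- exact: mpreimage.
- by apply: measurableT_comp => //; exact: measurable_funTS.
- by move=> x _; exact: g0.
Qed.

Lemma integral_pushforward_onto (g : T2 -> \bar R) : measurable_fun setT g ->
  \int[pushforward mu f]_(y in D2) g y = \int[mu]_(x in D1) g (f x).
Proof.
move=> mg; rewrite [LHS]integralE [RHS]integralE.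
rewrite !ge0_integral_pushforward_onto => [||y||y].
- by congr (_ - _); apply: eq_integral => x _; rewrite ?funeposE ?funenegE.
- exact: measurable_funeneg.
- exact: funeneg_ge0.
- exact: measurable_funepos.
- exact: funepos_ge0.
Qed.

End pushforward_onto.

Arguments measurable_BXY {R X Y}.

Section first_argmin.
Variables (R : realType) (f : nat -> R).

Definition first_argmin n k :=
  (forall l, (l < n)%N -> f k <= f l) /\ (forall l, (l < k)%N -> f k < f l).

Lemma first_argmin_exists n : (0 < n)%N -> exists2 k, (k < n)%N & first_argmin n k.
Proof.
case: n => // n _; elim: n => [|n [k kn [kmin kfirst]]].
  by exists 0%N => //; split => // l; rewrite ltnS leqn0 => /eqP ->.
have [lt_nk|le_kn] := ltP (f n.+1) (f k).
  exists n.+1 => //; split => l; rewrite ltnS.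
    by rewrite leq_eqVlt => /orP[/eqP -> //|/kmin]; exact: le_trans (ltW lt_nk).
  by move/kmin; exact: lt_le_trans.
exists k; first exact: ltn_trans kn _.
by split => // l; rewrite ltnS leq_eqVlt => /orP[/eqP -> //|/kmin].
Qed.

Lemma first_argmin_unique n k1 k2 : (k1 < n)%N -> (k2 < n)%N ->
  first_argmin n k1 -> first_argmin n k2 -> k1 = k2.
Proof.
move=> k1n k2n [min1 first1] [min2 first2].
by case: (ltngtP k1 k2) => // lt; [move: (first2 _ lt)|move: (first1 _ lt)];
  rewrite ltNge ?min1 ?min2.
Qed.

End first_argmin.

Section strong_measurability.
Variables (R : realType) (X Y : normedModType R).

Definition strongly_measurable_phi (mu : {finite_measure set pointT X Y -> \bar R}) :=
  exists (m : nat -> nat) (A : nat -> nat -> set (pointT X Y))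
         (U : nat -> nat -> tens X Y),
    (forall n k, measurable (A n k)) /\ (forall n k, in_ptensor (U n k)) /\
    {ae mu, forall p : pointT X Y, BXY p ->
      (fun n => pnorm (tdiff (tmul p.1 p.2) (simple_tens (m n) (A n) (U n) p)))
        @ \oo --> 0}.

Lemma integral_pnorm_tmul_lty (mu : {finite_measure set pointT X Y -> \bar R}) :
  (\int[mu]_(p in @BXY _ X Y) (pnorm (tmul p.1 p.2))%:E < +oo)%E.
Proof.
have pnorm_tmulE : (fun p : pointT X Y => pnorm (tmul p.1 p.2)) = pdist tzero.
  by apply/funext => p; apply: pnorm_teq => B _; rewrite /tdiff /tzero subr0.
apply: (@le_lt_trans _ _ (\int[mu]_(p in @BXY _ X Y) (cst 1%:E) p)%E).
  apply: ge0_le_integral => //; first exact: measurable_BXY.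
  - by move=> p _; rewrite lee_fin pnorm_ge0.
  - apply/measurable_EFinP/measurable_funTS; rewrite pnorm_tmulE.
    apply: continuous_measurable_pointT; exact: pdist_continuous in_ptensor_zero.
  - by move=> p [x1 y1]; rewrite lee_fin (le_trans (pnorm_tmul_le _ _)) ?mulr_ile1.
rewrite integral_cst ?mul1e; last exact: measurable_BXY.
by rewrite -ge0_fin_numE ?measure_ge0 ?fin_num_measure //; exact: measurable_BXY.
Qed.

Variable G : nat -> tens X Y.

Definition approximable (q : X * Y) :=
  forall e, 0 < e -> exists j, pdist (G j) q < e.

Definition nearest_set n k : set (pointT X Y) :=
  [set q | first_argmin (fun j => pdist (G j) q) n k].

Definition nonapprox_set : set (pointT X Y) :=
  \bigcup_k \bigcap_j [set q | k.+1%:R^-1 <= pdist (G j) q].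

Lemma nonapprox_setP q : nonapprox_set q <-> ~ approximable q.
Proof.
split=> [[k _ far] near|nap].
  have k0 : 0 < k.+1%:R^-1 :> R by rewrite invr_gt0.
  by have [j close] := near _ k0; move: (far j I) => /=; rewrite leNgt close.
apply: contrapT => notfar; apply: nap => e e0.
have [k _ /(_ k (leqnn k)) ke] := near_infty_natSinv_lt (PosNum e0).
apply: contrapT => nj; apply: notfar; exists k => // j _ /=.
by rewrite leNgt; apply/negP => lt; apply: nj; exists j; exact: lt_trans ke.
Qed.

Lemma nearest_set_cvg q : approximable q ->
  (fun n => pnorm (tdiff (tmul q.1 q.2) (simple_tens n (nearest_set n) G q)))
    @ \oo --> 0.
Proof.
move=> near; apply/cvgrPdist_lt => e e0; have [j close] := near e e0.
near=> n; have jn : (j < n)%N by near: n; exists j.+1.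
have [k kn kmin] :=
  first_argmin_exists (fun l => pdist (G l) q) (leq_ltn_trans (leq0n j) jn).
have -> : simple_tens n (nearest_set n) G q = G k.
  apply/funext => B; rewrite /simple_tens (bigD1 (Ordinal kn)) //= asboolT //.
  rewrite big1 ?addr0 // => i /eqP ik; rewrite asboolF // => imin.
  by apply: ik; apply: val_inj; exact: first_argmin_unique (ltn_ord i) kn imin kmin.
by rewrite sub0r normrN ger0_norm ?pnorm_ge0 //; exact: le_lt_trans (kmin.1 j jn) close.
Unshelve. all: by end_near.
Qed.

Hypothesis iG : forall j, in_ptensor (G j).

Let cpdist j : continuous (pdist (G j)) := pdist_continuous (iG j).

Lemma measurable_nearest_set n k : measurable (nearest_set n k).
Proof.
have imp_measurable (b : bool) (S : set (pointT X Y)) :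
    measurable S -> measurable [set q | b -> S q].
  case: b => mS; last by rewrite (_ : [set q | _] = setT) //; apply/seteqP; split.
  by rewrite (_ : [set q | _] = S) //; apply/seteqP; split => [q /(_ isT)|q Sq _].
rewrite (_ : nearest_set n k = \bigcap_l
    ([set q | (l < n)%N -> pdist (G k) q <= pdist (G l) q] `&`
     [set q | (l < k)%N -> pdist (G k) q < pdist (G l) q])).
  apply: bigcapT_measurable => l; apply: measurableI; apply: imp_measurable.
    by apply: measurable_pointT_le; exact: cpdist.
  by apply: measurable_pointT_lt; exact: cpdist.
apply/seteqP; split => [q [h1 h2] l _|q h].
  by split => /= hl; [exact: h1|exact: h2].
by split => l hl; have [h1 h2] := h l I; [exact: h1|exact: h2].
Qed.

Lemma measurable_nonapprox_set : measurable nonapprox_set.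
Proof.
apply: bigcupT_measurable => k; apply: bigcapT_measurable => j.
by apply: measurable_pointT_le => [q|]; [exact: cvg_cst|exact: cpdist].
Qed.

Lemma strongly_measurable_of_approximable
    (mu : {finite_measure set pointT X Y -> \bar R}) :
  {ae mu, forall q : pointT X Y, BXY q -> approximable q} -> strongly_measurable_phi mu.
Proof.
move=> [N [mN N0 badN]]; exists id, nearest_set, (fun _ => G).
split; first exact: measurable_nearest_set.
split=> //; exists N; split => // q /= nconv; apply: badN => /= approx.
by apply: nconv => Bq; exact: nearest_set_cvg (approx Bq).
Qed.

End strong_measurability.

Section simple_values.
Variables (R : realType) (X Y : normedModType R).
Variables (m : nat -> nat) (U : nat -> nat -> tens X Y).

(* A value of [simple_tens (m n) (A n) (U n)] is determined by [n] and by the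
   pattern of membership of the point in [A n 0], ..., [A n (m n).-1]; [pickle]
   enumerates these pairs. *)
Definition simple_values (j : nat) : tens X Y :=
  match @pickle_inv (nat * seq bool)%type j with
  | Some (n, s) => fun B => \sum_(k < m n) (if nth false s k then U n k B else 0)
  | None => tzero
  end.

Lemma in_ptensor_simple_values :
  (forall n k, in_ptensor (U n k)) -> forall j, in_ptensor (simple_values j).
Proof.
move=> iU j; rewrite /simple_values; case: pickle_inv => [[n s]|].
  exact: in_ptensor_masked_sum.
exact: in_ptensor_zero.
Qed.

Lemma simple_tens_values (A : nat -> nat -> set (pointT X Y)) n p :
  exists j, simple_tens (m n) (A n) (U n) p = simple_values j.
Proof.
exists (pickle (n, [seq `[< A n k p >] | k <- iota 0 (m n)])).
rewrite /simple_values pickleK_inv; apply/funext => B; apply: eq_bigr => k _.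
by rewrite (nth_map 0%N) ?size_iota // nth_iota.
Qed.

End simple_values.

Section contraction_pushforward.
Variables (R : realType) (X Y Z : normedModType R) (P : Y -> Z).
Hypothesis linP : forall (a : R) y1 y2, P (a *: y1 + y2) = a *: P y1 + P y2.
Hypothesis contrP : forall y, `|P y| <= `|y|.

Definition contract (p : X * Y) : X * Z := (p.1, P p.2).

Lemma contract_continuous : continuous contract.
Proof.
move=> p; have cP := contraction_continuous linP contrP.
have fst_p : fst @ p --> p.1 by exact: cvg_fst.
have snd_p : snd @ p --> p.2 by exact: cvg_snd.
exact: cvg_pair fst_p (continuous_comp snd_p (cP p.2)).
Qed.

Let measurable_contract : measurable_fun setT (contract : pointT X Y -> pointT X Z).
Proof. exact: continuous_measurable_pointT_map contract_continuous. Qed.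

Definition contract_mfun : {mfun pointT X Y >-> pointT X Z} :=
  HB.pack (contract : pointT X Y -> pointT X Z)
    (isMeasurableFun.Build _ _ _ _ _ measurable_contract).

Let mBXY := @measurable_BXY R X Y.
Let mBXZ := @measurable_BXY R X Z.

Lemma contract_BXY : @BXY _ X Y `<=` contract @^-1` @BXY _ X Z.
Proof. by move=> p [x1 y1]; split => //=; exact: le_trans (contrP _) y1. Qed.

Lemma approximable_contract (m : nat -> nat) (A : nat -> nat -> set (pointT X Y))
    (U : nat -> nat -> tens X Y) (p : X * Y) :
  (forall n k, in_ptensor (U n k)) ->
  (fun n => pnorm (tdiff (tmul p.1 p.2) (simple_tens (m n) (A n) (U n) p)))
    @ \oo --> 0 ->
  approximable (fun j => tmap P (simple_values m U j)) (contract p).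
Proof.
move=> iU /cvgrPdist_lt conv e e0; have [n _ /(_ n (leqnn n))] := conv e e0.
have [j ->] := simple_tens_values m U A n p.
rewrite sub0r normrN ger0_norm ?pnorm_ge0 // => close; exists j.
apply: le_lt_trans close; apply: (pnorm_map_le linP contrP).
exact/in_ptensor_diff/in_ptensor_simple_values/iU/in_ptensor_tmul.
Qed.

Lemma strongly_measurable_contract (mu : {finite_measure set pointT X Y -> \bar R}) :
  mu (~` @BXY _ X Y) = 0%E -> strongly_measurable_phi mu ->
  strongly_measurable_phi (fin_pushforward mu contract_mfun).
Proof.
move=> mu0 [m [A [U [mA [iU [N [mN N0 badN]]]]]]].
set G := fun j => tmap P (simple_values m U j).
have iG j : in_ptensor (G j).
  exact/(in_ptensor_map linP contrP)/in_ptensor_simple_values.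
apply: (strongly_measurable_of_approximable iG).
exists (nonapprox_set G); split; first exact: measurable_nonapprox_set.
  change (mu (contract @^-1` nonapprox_set G) = 0%E).
  have mpre : measurable (contract @^-1` nonapprox_set G : set (pointT X Y)).
    rewrite -[X in measurable X]setTI.
    by apply: measurable_contract => //; exact: measurable_nonapprox_set.
  have mBc : measurable (~` @BXY _ X Y) by apply: measurableC; exact: measurable_BXY.
  apply: (subset_measure0 mpre (measurableU _ _ mN mBc) _
                          (null_set_setU mN mBc N0 mu0)).
  move=> p /nonapprox_setP far; apply: contrapT => /not_orP[nNp /contrapT Bp].
  apply: far; apply: (approximable_contract (A := A) iU); apply: contrapT => nconv.
  by apply: nNp; apply: badN => /(_ Bp).
by move=> q /= bad; apply/nonapprox_setP => approx; apply: bad.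
Qed.

Lemma INA_contract (v : tens X Y) :
  INA_pi v -> pnorm (tmap P v) = pnorm v -> INA_pi (tmap P v).
Proof.
move=> [mu [mu0 [[smu _] [int_v mass_v]]]] norm_eq.
exists (fin_pushforward mu contract_mfun); split; [|split; [split|split]].
- exact: (pushforward_compl0 measurable_contract mBXY mBXZ mu0 contract_BXY).
- exact: strongly_measurable_contract.
- exact: integral_pnorm_tmul_lty.
- move=> B hB; rewrite /tmap int_v; last exact: bbilinear_comp.
  rewrite (integral_pushforward_onto measurable_contract mBXY mBXZ mu0 contract_BXY)//.
  apply/measurable_EFinP; apply: continuous_measurable_pointT.
  exact: bbilinear_continuous.
- rewrite norm_eq -mass_v.
  exact: (pushforward_onto measurable_contract mBXY mBXZ mu0 contract_BXY).
Qed.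

End contraction_pushforward.

Theorem corollary2p10 (R : realType) (X Y Z : completeNormedModType R)
  (J : Z -> Y) :
  one_complemented J ->
  all_INA X Y -> all_INA X Z.
Proof.
case=> linJ normJ [P [linP PJ contrP _]] INA_XY u iu.
have contrJ z : `|J z| <= `|z| by rewrite normJ.
have PJu : tmap P (tmap J u) = u.
  by apply/funext => B; congr u; apply/funext => x; apply/funext => z; rewrite PJ.
have iv := in_ptensor_map linJ contrJ iu.
rewrite -PJu; apply: (INA_contract linP contrP (INA_XY _ iv)).
apply/le_anti; rewrite (pnorm_map_le linP contrP iv) /=.
by rewrite -{1}PJu (pnorm_map_le linJ contrJ (in_ptensor_map linP contrP iv)).
Qed.
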